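(* Let $\mathcal{A}$ be a strictly locally finitely presentable category and $\mathcal{B}$ a locally finitely presentable category in which the finitely generated objects are precisely the finitely presentable ones. Then a functor $F\colon\mathcal{A}\to\mathcal{B}$ is finitary if and only if it is finitely bounded.
   Context: An object $A$ is finitely presentable if $\mathcal{A}(A,-)$ preserves filtered colimits, and finitely generated if $\mathcal{A}(A,-)$ preserves colimits of filtered diagrams all of whose connecting morphisms are monomorphisms. A category is locally finitely presentable (lfp) if it is cocomplete, has (up to isomorphism) only a set of finitely presentable objects, and every object is a filtered colimit of finitely presentable objects. A functor is finitary if it preserves filtered colimits. A finitely generated subobject of $A$ is a monomorphism $m\colon M\rightarrowtail A$ with $M$ finitely generated. A functor $F\colon\mathcal{A}\to\mathcal{B}$ is finitely bounded if for every object $A$ and every finitely generated subobject $m_0\colon M_0\rightarrowtail FA$ there exist a finitely generated subobject $m\colon M\rightarrowtail A$ and $g\colon M_0\to FM$ with $m_0=Fm\cdot g$. A morphism $u\colon X\to Y$ is called finitary if it factorizes as $u=w\cdot v$ with $v\colon X\to C$, $w\colon C\to Y$ and $C$ finitely presentable. An lfp category is strictly lfp if for every object $A$ and every finitely generated subobject $m\colon M\rightarrowtail A$ there is a finitary endomorphism $u\colon A\to A$ with $u\cdot m=m$. *)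

From Stdlib Require Import FunctionalExtensionality.

Set Implicit Arguments.
Unset Strict Implicit.

(** Locally small categories: objects in an arbitrary [Type], hom-sets small
    (in [Set]).  Small categories (diagram shapes) are those with [O : Set]. *)
Record Cat (O : Type) : Type := {
  hom : O -> O -> Set;
  idm : forall a, hom a a;
  comp : forall a b c, hom b c -> hom a b -> hom a c;
  comp_idl : forall a b (f : hom a b), comp (idm b) f = f;
  comp_idr : forall a b (f : hom a b), comp f (idm a) = f;
  comp_assoc : forall a b c d (f : hom c d) (g : hom b c) (h : hom a b),
      comp f (comp g h) = comp (comp f g) h
}.

Arguments hom {O} C a b : rename.
Arguments idm {O} C a : rename.
Arguments comp {O} C {a b c} f g : rename.

Record Functor (O1 O2 : Type) (C : Cat O1) (D : Cat O2) : Type := {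
  fobj : O1 -> O2;
  fmap : forall a b, hom C a b -> hom D (fobj a) (fobj b);
  fmap_id : forall a, fmap (idm C a) = idm D (fobj a);
  fmap_comp : forall a b c (f : hom C b c) (g : hom C a b),
      fmap (comp C f g) = comp D (fmap f) (fmap g)
}.

Arguments fobj {O1 O2 C D} F x : rename.
Arguments fmap {O1 O2 C D} F {a b} f : rename.

Section Fcomp.
Variables (O1 O2 O3 : Type) (C1 : Cat O1) (C2 : Cat O2) (C3 : Cat O3).
Variables (F : Functor C2 C3) (G : Functor C1 C2).

Lemma Fcomp_id a :
  fmap F (fmap G (idm C1 a)) = idm C3 (fobj F (fobj G a)).
Proof. now rewrite (fmap_id G), (fmap_id F). Qed.

Lemma Fcomp_comp a b c (f : hom C1 b c) (g : hom C1 a b) :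
  fmap F (fmap G (comp C1 f g)) = comp C3 (fmap F (fmap G f)) (fmap F (fmap G g)).
Proof. now rewrite (fmap_comp G), (fmap_comp F). Qed.

Definition Fcomp : Functor C1 C3 :=
  {| fobj := fun x => fobj F (fobj G x);
     fmap := fun a b f => fmap F (fmap G f);
     fmap_id := Fcomp_id;
     fmap_comp := Fcomp_comp |}.
End Fcomp.

Definition SetCat : Cat Set :=
  {| hom := fun X Y : Set => X -> Y;
     idm := fun X (x : X) => x;
     comp := fun X Y Z (f : Y -> Z) (g : X -> Y) (x : X) => f (g x);
     comp_idl := fun _ _ _ => eq_refl;
     comp_idr := fun _ _ _ => eq_refl;
     comp_assoc := fun _ _ _ _ _ _ _ => eq_refl |}.

Section HomF.
Variables (O : Type) (C : Cat O) (A : O).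

Lemma HomF_id a : (fun g : hom C A a => comp C (idm C a) g) = (fun g => g).
Proof. apply functional_extensionality; intro g; apply comp_idl. Qed.

Lemma HomF_comp a b c (f : hom C b c) (g : hom C a b) :
  (fun h : hom C A a => comp C (comp C f g) h)
  = (fun h => comp C f (comp C g h)).
Proof. apply functional_extensionality; intro h; symmetry; apply comp_assoc. Qed.

Definition HomF : Functor C SetCat :=
  @Build_Functor O Set C SetCat (fun X => hom C A X)
     (fun a b (f : hom C a b) (g : hom C A a) => comp C f g) HomF_id HomF_comp.

End HomF.

Unset Implicit Arguments.
Section Notions.
Variables (O : Type) (C : Cat O).

Definition is_cocone (SJ : Set) (J : Cat SJ) (D : Functor J C) (X : O)
    (c : forall j, hom C (fobj D j) X) : Prop :=
  forall i j (f : hom J i j), comp C (c j) (fmap D f) = c i.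

Definition is_colimit (SJ : Set) (J : Cat SJ) (D : Functor J C) (X : O)
    (c : forall j, hom C (fobj D j) X) : Prop :=
  is_cocone SJ J D X c /\
  forall (Y : O) (d : forall j, hom C (fobj D j) Y), is_cocone SJ J D Y d ->
    exists u : hom C X Y,
      (forall j, comp C u (c j) = d j) /\
      (forall u' : hom C X Y, (forall j, comp C u' (c j) = d j) -> u' = u).

Definition cocomplete : Prop :=
  forall (SJ : Set) (J : Cat SJ) (D : Functor J C),
    exists (X : O) (c : forall j, hom C (fobj D j) X), is_colimit SJ J D X c.

Definition mono (a b : O) (m : hom C a b) : Prop :=
  forall x (f g : hom C x a), comp C m f = comp C m g -> f = g.

Definition iso (a b : O) : Prop :=
  exists (f : hom C a b) (g : hom C b a),
    comp C g f = idm C a /\ comp C f g = idm C b.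

End Notions.
Arguments is_cocone {O} C {SJ J} D {X} c.
Arguments is_colimit {O} C {SJ J} D {X} c.
Arguments mono {O} C {a b} m.
Arguments iso {O} C a b.
Set Implicit Arguments.

Definition filtered (SJ : Set) (J : Cat SJ) : Prop :=
  inhabited SJ /\
  (forall i j : SJ, exists (k : SJ) (_ : hom J i k) (_ : hom J j k), True) /\
  (forall (i j : SJ) (f g : hom J i j),
     exists (k : SJ) (h : hom J j k), comp J h f = comp J h g).

Definition mono_diagram (O : Type) (C : Cat O) (SJ : Set) (J : Cat SJ)
    (D : Functor J C) : Prop :=
  forall i j (f : hom J i j), mono C (fmap D f).

Definition preserves_colimits_of (O1 O2 : Type) (C : Cat O1) (E : Cat O2)
    (F : Functor C E)
    (P : forall (SJ : Set) (J : Cat SJ), Functor J C -> Prop) : Prop :=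
  forall (SJ : Set) (J : Cat SJ) (D : Functor J C) (X : O1)
         (c : forall j, hom C (fobj D j) X),
    P SJ J D -> is_colimit C D c ->
    is_colimit E (Fcomp F D) (fun j => fmap F (c j)).

Definition finitary (O1 O2 : Type) (C : Cat O1) (E : Cat O2)
    (F : Functor C E) : Prop :=
  preserves_colimits_of F (fun SJ J _ => filtered J).

Definition fin_pres (O : Type) (C : Cat O) (A : O) : Prop :=
  finitary (HomF C A).

Definition fin_gen (O : Type) (C : Cat O) (A : O) : Prop :=
  preserves_colimits_of (HomF C A)
    (fun SJ J D => filtered J /\ mono_diagram D).

Definition lfp (O : Type) (C : Cat O) : Prop :=
  cocomplete O C /\
  (exists (I : Set) (g : I -> O),
     (forall i, fin_pres C (g i)) /\
     (forall A, fin_pres C A -> exists i, iso C A (g i))) /\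
  (forall A : O, exists (SJ : Set) (J : Cat SJ) (D : Functor J C)
                        (c : forall j, hom C (fobj D j) A),
     filtered J /\ (forall j, fin_pres C (fobj D j)) /\ is_colimit C D c).

Definition finitary_mor (O : Type) (C : Cat O) (X Y : O) (u : hom C X Y) : Prop :=
  exists (K : O) (v : hom C X K) (w : hom C K Y),
    fin_pres C K /\ u = comp C w v.

Definition strictly_lfp (O : Type) (C : Cat O) : Prop :=
  lfp C /\
  forall (A M : O) (m : hom C M A), mono C m -> fin_gen C M ->
    exists u : hom C A A, finitary_mor u /\ comp C u m = m.

Definition finitely_bounded (O1 O2 : Type) (C : Cat O1) (E : Cat O2)
    (F : Functor C E) : Prop :=
  forall (A : O1) (M0 : O2) (m0 : hom E M0 (fobj F A)),
    mono E m0 -> fin_gen E M0 ->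
    exists (M : O1) (m : hom C M A),
      mono C m /\ fin_gen C M /\
      exists g : hom E M0 (fobj F M), m0 = comp E (fmap F m) g.

From Stdlib Require Import FunctionalExtensionality ProofIrrelevance ClassicalEpsilon Arith.

(* In an lfp category a map [f] out of a finitely presentable object factors
   through a finitely generated subobject of its codomain: its image, the colimit
   of the chain obtained by repeatedly quotienting by the part of the kernel of
   [f] seen by finitely presentable objects.
   If [F] is finitary, a finitely generated (hence finitely presentable)
   subobject of [F X] factors through [F] of a colimit injection [D j -> X] of a
   presentation of [X], hence through [F] of the image of [D j].
   Conversely, let [F] be finitely bounded. Every map from a finitely presentable
   object into [F W] factors through [F K -> F W] with [K] finitely presentable,
   since by strictness the inclusion of the bounding subobject factors through a
   finitary endomorphism of [W]. The same trick, applied inside a filtered colimit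
   in [A], moves such factorizations back into the diagram; this gives the
   essential uniqueness that makes [F] preserve filtered colimits, maps in [B]
   being determined by their restrictions to finitely presentable objects. *)

Set Implicit Arguments.
Unset Strict Implicit.

Lemma colimit_hom_ext O (C : Cat O) (SJ : Set) (J : Cat SJ) (D : Functor J C) X
    (c : forall j, hom C (fobj D j) X) (Hc : is_colimit C D c) Y (u u' : hom C X Y) :
  (forall j, comp C u (c j) = comp C u' (c j)) -> u = u'.
Proof.
  intros E. destruct Hc as [Hc Hu].
  destruct (Hu Y (fun j => comp C u (c j))) as [v [_ Hv]].
  { intros i j f. rewrite <- comp_assoc, Hc. reflexivity. }
  rewrite (Hv u (fun j => eq_refl)), (Hv u' (fun j => eq_sym (E j))). reflexivity.
Qed.

Section SetColimits.
Variables (SJ : Set) (J : Cat SJ) (G : Functor J SetCat).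

Lemma fmap_comp_app a b c (f : hom J b c) (g : hom J a b) x :
  fmap G (comp J f g) x = fmap G f (fmap G g x).
Proof. now rewrite fmap_comp. Qed.

Lemma fmap_id_app a x : fmap G (idm J a) x = x.
Proof. now rewrite fmap_id. Qed.

Definition eventually_equal (p q : {j : SJ & fobj G j}) : Prop :=
  exists k (a : hom J (projT1 p) k) (b : hom J (projT1 q) k),
    fmap G a (projT2 p) = fmap G b (projT2 q).

Lemma eventually_equal_refl p : eventually_equal p p.
Proof. now exists (projT1 p), (idm J _), (idm J _). Qed.

Lemma eventually_equal_sym p q : eventually_equal p q -> eventually_equal q p.
Proof. intros [k [a [b H]]]. now exists k, b, a. Qed.

Lemma eventually_equal_trans (HJ : filtered J) p q r :
  eventually_equal p q -> eventually_equal q r -> eventually_equal p r.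
Proof.
  intros [k [a [b H]]] [k' [a' [b' H']]].
  destruct HJ as [_ [Hupper Hcoeq]].
  destruct (Hupper k k') as [l [h [h' _]]].
  destruct (Hcoeq _ _ (comp J h b) (comp J h' a')) as [l' [e He]].
  exists l', (comp J e (comp J h a)), (comp J e (comp J h' b')).
  assert (He' := f_equal (fun g => fmap G g (projT2 q)) He). simpl in He'.
  rewrite !fmap_comp_app in He'. rewrite !fmap_comp_app, H, He', H'. reflexivity.
Qed.

Definition decide_bool (P : Prop) : bool :=
  if excluded_middle_informative P then true else false.

Lemma decide_bool_true (P : Prop) : decide_bool P = true <-> P.
Proof. unfold decide_bool. destruct excluded_middle_informative; intuition discriminate. Qed.

Lemma set_colimit_surj X (c : forall j, hom SetCat (fobj G j) X) :
  is_colimit SetCat G c -> forall x : X, exists j (y : fobj G j), c j y = x.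
Proof.
  intros Hc x.
  assert (E : (fun _ : X => true) = fun z => decide_bool (exists j y, c j y = z)).
  { apply (colimit_hom_ext Hc). intro j. apply functional_extensionality. intro y.
    symmetry. apply decide_bool_true. eauto. }
  apply decide_bool_true. symmetry. exact (f_equal (fun h => h x) E).
Qed.

Lemma decide_bool_iff (P Q : Prop) : (P <-> Q) -> decide_bool P = decide_bool Q.
Proof.
  intros H. unfold decide_bool.
  destruct (excluded_middle_informative P), (excluded_middle_informative Q); tauto.
Qed.

(* Sending an element to the indicator of its class is a cocone into [bool]-valued
   predicates, so elements with equal images in the colimit have equal classes. *)
Lemma set_colimit_eventually_equal (HJ : filtered J) X (c : forall j, hom SetCat (fobj G j) X) :
  is_colimit SetCat G c ->
  forall i j x y, c i x = c j y -> eventually_equal (existT _ i x) (existT _ j y).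
Proof.
  intros [_ Hu] i j x y Hxy.
  pose (cls := fun p q => decide_bool (eventually_equal p q)).
  assert (Hcls : forall p p', eventually_equal p p' -> cls p = cls p').
  { intros p p' H. apply functional_extensionality. intro q. apply decide_bool_iff.
    split; intro H'; eapply eventually_equal_trans; eauto using eventually_equal_sym. }
  destruct (Hu _ (fun j y => cls (existT _ j y))) as [u [Hu1 _]].
  { intros j1 j2 g. apply functional_extensionality. intro z. symmetry. apply Hcls.
    exists j2, g, (idm J _). simpl. now rewrite fmap_id_app. }
  assert (E : cls (existT _ i x) = cls (existT _ j y)).
  { transitivity (u (c i x)); [exact (eq_sym (f_equal (fun h => h x) (Hu1 i)))|].
    rewrite Hxy. exact (f_equal (fun h => h y) (Hu1 j)). }
  apply (f_equal (fun h => h (existT _ j y))) in E. unfold cls in E.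
  apply decide_bool_true. rewrite E. apply decide_bool_true, eventually_equal_refl.
Qed.

Lemma set_colimit_intro X (c : forall j, hom SetCat (fobj G j) X) :
  is_cocone SetCat G c ->
  (forall x : X, exists j (y : fobj G j), c j y = x) ->
  (forall i j x y, c i x = c j y -> eventually_equal (existT _ i x) (existT _ j y)) ->
  is_colimit SetCat G c.
Proof.
  intros Hc Hsurj Hinj. split; [exact Hc|]. intros Y d Hd.
  assert (Hwd : forall i j x y, c i x = c j y -> d i x = d j y).
  { intros i j x y H. destruct (Hinj i j x y H) as [k [a [b E]]]. simpl in *.
    rewrite <- (Hd _ _ a), <- (Hd _ _ b). simpl. now rewrite E. }
  assert (Hpick : forall x : X, {p : {j : SJ & fobj G j} | c (projT1 p) (projT2 p) = x}).
  { intro x. apply constructive_indefinite_description.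
    destruct (Hsurj x) as [j [y H]]. now exists (existT _ j y). }
  exists (fun x => d _ (projT2 (proj1_sig (Hpick x)))). split.
  - intro j. apply functional_extensionality. intro y. simpl.
    apply Hwd. apply (proj2_sig (Hpick _)).
  - intros u' Hu'. apply functional_extensionality. intro x. simpl.
    rewrite <- (proj2_sig (Hpick x)) at 1.
    exact (f_equal (fun h => h _) (Hu' _)).
Qed.

End SetColimits.

Section FinitelyPresentable.
Variables (O : Type) (C : Cat O).

Definition epi (a b : O) (e : hom C a b) : Prop :=
  forall Y (f g : hom C b Y), comp C f e = comp C g e -> f = g.

Variables (SJ : Set) (J : Cat SJ) (D : Functor J C) (X : O) (c : forall j, hom C (fobj D j) X).
Hypotheses (HJ : filtered J) (Hc : is_colimit C D c).

Lemma fin_pres_factor Q : fin_pres C Q ->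
  forall x : hom C Q X, exists j h, x = comp C (c j) h.
Proof.
  intros HQ x. destruct (set_colimit_surj (HQ SJ J D X c HJ Hc) x) as [j [h E]].
  now exists j, h.
Qed.

Lemma fin_pres_factor_pair Q : fin_pres C Q ->
  forall x1 x2 : hom C Q X, exists j h1 h2, x1 = comp C (c j) h1 /\ x2 = comp C (c j) h2.
Proof.
  intros HQ x1 x2.
  destruct (fin_pres_factor HQ x1) as [j1 [h1 ->]], (fin_pres_factor HQ x2) as [j2 [h2 ->]].
  destruct HJ as [_ [Hupper _]]. destruct (Hupper j1 j2) as [j [a1 [a2 _]]].
  exists j, (comp C (fmap D a1) h1), (comp C (fmap D a2) h2).
  now rewrite !comp_assoc, !(proj1 Hc).
Qed.

Lemma fin_pres_factor_unique Q : fin_pres C Q ->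
  forall i j (h : hom C Q (fobj D i)) (h' : hom C Q (fobj D j)),
  comp C (c i) h = comp C (c j) h' ->
  exists k (a : hom J i k) (b : hom J j k), comp C (fmap D a) h = comp C (fmap D b) h'.
Proof.
  intros HQ i j h h' E.
  destruct (set_colimit_eventually_equal HJ (HQ SJ J D X c HJ Hc) E) as [k [a [b E']]].
  now exists k, a, b.
Qed.

Lemma fin_pres_factor_unique_at Q : fin_pres C Q ->
  forall j (h h' : hom C Q (fobj D j)), comp C (c j) h = comp C (c j) h' ->
  exists k (a : hom J j k), comp C (fmap D a) h = comp C (fmap D a) h'.
Proof.
  intros HQ j h h' E. destruct (fin_pres_factor_unique HQ E) as [k [a [b E']]].
  destruct HJ as [_ [_ Hcoeq]]. destruct (Hcoeq _ _ a b) as [l [e He]].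
  exists l, (comp J e a). rewrite He at 2. rewrite !fmap_comp, <- !comp_assoc, E'.
  reflexivity.
Qed.

End FinitelyPresentable.
Arguments epi {O} C {a b} e.

Lemma lfp_hom_ext O (C : Cat O) : lfp C ->
  forall Z Y (f1 f2 : hom C Z Y),
  (forall Q (q : hom C Q Z), fin_pres C Q -> comp C f1 q = comp C f2 q) -> f1 = f2.
Proof.
  intros [_ [_ Hpres]] Z Y f1 f2 H. destruct (Hpres Z) as [SJ [J [D [c [_ [Hfp Hc]]]]]].
  apply (colimit_hom_ext Hc). intro j. apply H, Hfp.
Qed.

Lemma lfp_colimit_inj_mono O (C : Cat O) (SJ : Set) (J : Cat SJ) (D : Functor J C) X
    (c : forall j, hom C (fobj D j) X) :
  lfp C -> filtered J -> mono_diagram D -> is_colimit C D c -> forall j, mono C (c j).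
Proof.
  intros HC HJ HD Hc j Z f g E. apply (lfp_hom_ext HC). intros Q q HQ.
  assert (E' : comp C (c j) (comp C f q) = comp C (c j) (comp C g q))
    by now rewrite !comp_assoc, E.
  destruct (fin_pres_factor_unique_at HJ Hc HQ E') as [k [a Ea]].
  exact (HD _ _ a _ _ _ Ea).
Qed.

(* The shape of a family of parallel pairs [Q s ⇉ E]: [None] is [E], [Some s] is [Q s],
   and the two maps [Some s -> None] are [true] and [false]. *)
Definition pairs_hom (S : Set) (a b : option S) : Set :=
  match a, b with
  | Some s, Some s' => {_ : unit | s = s'}
  | Some _, None => bool
  | None, Some _ => Empty_set
  | None, None => unit
  end.

Definition pairs_id (S : Set) (a : option S) : pairs_hom a a :=
  match a with None => tt | Some s => exist _ tt eq_refl end.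

Definition pairs_comp (S : Set) (a b c : option S) :
    pairs_hom b c -> pairs_hom a b -> pairs_hom a c :=
  match a, b, c return pairs_hom b c -> pairs_hom a b -> pairs_hom a c with
  | Some _, Some _, Some _ => fun f g => exist _ tt (eq_trans (proj2_sig g) (proj2_sig f))
  | Some _, Some _, None => fun f _ => f
  | Some _, None, None => fun _ g => g
  | None, None, None => fun _ _ => tt
  | _, None, Some _ => fun f _ => match f with end
  | None, Some _, _ => fun _ g => match g with end
  end.

Ltac pairs_cases :=
  repeat match goal with
  | a : option _ |- _ => destruct a
  end; simpl in *;
  repeat match goal with
  | x : unit |- _ => destruct x
  | x : Empty_set |- _ => destruct x
  | x : {_ : unit | _} |- _ => let p := fresh in destruct x as [[] p]
  end.

Lemma pairs_comp_idl (S : Set) (a b : option S) (f : pairs_hom a b) : pairs_comp (pairs_id b) f = f.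
Proof. pairs_cases; try reflexivity; f_equal; apply proof_irrelevance. Qed.

Lemma pairs_comp_idr (S : Set) (a b : option S) (f : pairs_hom a b) : pairs_comp f (pairs_id a) = f.
Proof. pairs_cases; try reflexivity; f_equal; apply proof_irrelevance. Qed.

Lemma pairs_comp_assoc (S : Set) (a b c d : option S)
    (f : pairs_hom c d) (g : pairs_hom b c) (h : pairs_hom a b) :
  pairs_comp f (pairs_comp g h) = pairs_comp (pairs_comp f g) h.
Proof. pairs_cases; try reflexivity; f_equal; apply proof_irrelevance. Qed.

Definition PairsCat (S : Set) : Cat (option S) :=
  {| hom := @pairs_hom S; idm := @pairs_id S; comp := @pairs_comp S;
     comp_idl := @pairs_comp_idl S; comp_idr := @pairs_comp_idr S;
     comp_assoc := @pairs_comp_assoc S |}.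

Section JointCoequalizer.
Variables (O : Type) (C : Cat O) (S : Set) (E : O) (Q : S -> O) (x y : forall s, hom C (Q s) E).

Definition pairs_obj (a : option S) : O := match a with None => E | Some s => Q s end.

Definition pairs_map (a b : option S) : pairs_hom a b -> hom C (pairs_obj a) (pairs_obj b) :=
  match a, b return pairs_hom a b -> hom C (pairs_obj a) (pairs_obj b) with
  | Some s, Some _ => fun f =>
      match proj2_sig f in _ = s' return hom C (Q s) (Q s') with eq_refl => idm C (Q s) end
  | Some s, None => fun f => if f then x s else y s
  | None, Some _ => fun f => match f with end
  | None, None => fun _ => idm C E
  end.

Lemma pairs_map_id a : pairs_map (pairs_id a) = idm C (pairs_obj a).
Proof. now destruct a. Qed.

Lemma pairs_map_comp a b c (f : pairs_hom b c) (g : pairs_hom a b) :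
  pairs_map (pairs_comp f g) = comp C (pairs_map f) (pairs_map g).
Proof.
  pairs_cases; repeat match goal with H : _ = _ |- _ => subst end; simpl;
    now rewrite ?comp_idl, ?comp_idr.
Qed.

Definition pairs_diagram : Functor (PairsCat S) C :=
  @Build_Functor _ _ (PairsCat S) C pairs_obj pairs_map pairs_map_id pairs_map_comp.

Definition coequalizes Y (g : hom C E Y) : Prop := forall s, comp C g (x s) = comp C g (y s).

Definition is_joint_coequalizer X (k : hom C E X) : Prop :=
  coequalizes k /\
  (forall Y (g : hom C E Y), coequalizes g -> exists u, comp C u k = g) /\
  epi C k.

Lemma pairs_cocone_of Y (g : hom C E Y) : coequalizes g ->
  is_cocone C pairs_diagram
    (fun a => match a return hom C (pairs_obj a) Y with None => g | Some s => comp C g (x s) end).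
Proof.
  intros Hg [i|] [j|] f; pairs_cases; subst; simpl; try apply comp_idr.
  destruct f; [reflexivity|]. symmetry. apply Hg.
Qed.

Lemma joint_coequalizer_exists : cocomplete O C -> exists X (k : hom C E X), is_joint_coequalizer k.
Proof.
  intros Hcc. destruct (Hcc _ _ pairs_diagram) as [X [k [Hk Hku]]].
  assert (Hkx : forall s, comp C (k None) (x s) = k (Some s))
    by (intro s; exact (Hk (Some s) None true)).
  assert (Hky : forall s, comp C (k None) (y s) = k (Some s))
    by (intro s; exact (Hk (Some s) None false)).
  exists X, (k None). split; [|split].
  - intro s. now rewrite Hkx, Hky.
  - intros Y g Hg. destruct (Hku Y _ (pairs_cocone_of Hg)) as [u [Hu _]]. exists u. exact (Hu None).
  - intros Y a b Hab. apply (colimit_hom_ext (conj Hk Hku)). intros [s|]; [|exact Hab].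
    simpl. rewrite <- Hkx, !comp_assoc. exact (f_equal (fun z => comp C z (x s)) Hab).
Qed.

End JointCoequalizer.

Section FpKernelQuotient.
Variables (O : Type) (C : Cat O) (E A : O) (m : hom C E A).

Definition respects_fp_kernel Y (g : hom C E Y) : Prop :=
  forall Q (a b : hom C Q E), fin_pres C Q -> comp C m a = comp C m b -> comp C g a = comp C g b.

Definition fp_kernel_quotient X (k : hom C E X) : Prop :=
  respects_fp_kernel k /\
  (forall Y (g : hom C E Y), respects_fp_kernel g -> exists u, comp C u k = g) /\
  epi C k.

(* Coequalize all pairs of maps out of the representative finitely presentable
   objects that [m] identifies. *)
Lemma fp_kernel_quotient_exists : lfp C -> exists X (k : hom C E X), fp_kernel_quotient k.
Proof.
  intros [Hcc [[I [gi [Hgi Hrep]]] _]].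
  pose (S := {s : {i : I & (hom C (gi i) E * hom C (gi i) E)%type} |
                comp C m (fst (projT2 s)) = comp C m (snd (projT2 s))}).
  destruct (joint_coequalizer_exists (fun s : S => fst (projT2 (proj1_sig s)))
              (fun s : S => snd (projT2 (proj1_sig s))) Hcc) as [X [k [Hk [Hku Hepi]]]].
  exists X, k. split; [|split; [|exact Hepi]].
  - intros Q a b HQ Hab. destruct (Hrep Q HQ) as [i [phi [psi [Hpp _]]]].
    assert (Hs : comp C m (comp C a psi) = comp C m (comp C b psi)) by now rewrite !comp_assoc, Hab.
    assert (E1 := Hk (exist _ (existT _ i (comp C a psi, comp C b psi)) Hs)). simpl in E1.
    rewrite <- (comp_idr a), <- (comp_idr b), <- Hpp, !comp_assoc.
    rewrite <- (comp_assoc _ a), <- (comp_assoc _ b).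
    now rewrite E1.
  - intros Y g Hg. apply Hku. intros [[i [a b]] Hab]. exact (Hg _ a b (Hgi i) Hab).
Qed.

Lemma fp_kernel_quotient_factor X (k : hom C E X) :
  fp_kernel_quotient k -> exists m' : hom C X A, comp C m' k = m.
Proof. intros [_ [Hku _]]. apply Hku. now intros Q a b _ Hab. Qed.

End FpKernelQuotient.

Definition le_hom (n m : nat) : Set := {_ : unit | n <= m}.

Definition le_hom_of n m (H : n <= m) : le_hom n m := exist _ tt H.

Lemma le_hom_eq n m (f g : le_hom n m) : f = g.
Proof. destruct f as [[] p], g as [[] q]. f_equal. apply proof_irrelevance. Qed.

Definition OmegaCat : Cat nat :=
  {| hom := le_hom;
     idm := fun n => le_hom_of (le_n n);
     comp := fun a b c f g => le_hom_of (Nat.le_trans _ _ _ (proj2_sig g) (proj2_sig f));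
     comp_idl := fun _ _ _ => le_hom_eq _ _;
     comp_idr := fun _ _ _ => le_hom_eq _ _;
     comp_assoc := fun _ _ _ _ _ _ _ => le_hom_eq _ _ |}.

Lemma OmegaCat_filtered : filtered OmegaCat.
Proof.
  split; [exact (inhabits 0)|split].
  - intros i j.
    now exists (max i j), (le_hom_of (Nat.le_max_l i j)), (le_hom_of (Nat.le_max_r i j)).
  - intros i j f g. exists j, (idm OmegaCat j). apply le_hom_eq.
Qed.

Section Image.
Variables (O : Type) (C : Cat O) (HC : lfp C) (P A : O) (f : hom C P A).

Lemma quotient_step_exists E (m : hom C E A) :
  exists p : {X : O & (hom C E X * hom C X A)%type},
    fp_kernel_quotient m (fst (projT2 p)) /\ comp C (snd (projT2 p)) (fst (projT2 p)) = m.
Proof.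
  destruct (fp_kernel_quotient_exists m HC) as [X [k Hk]].
  destruct (fp_kernel_quotient_factor Hk) as [m' Hm'].
  now exists (existT _ X (k, m')).
Qed.

Definition quotient_step E (m : hom C E A) : {X : O & (hom C E X * hom C X A)%type} :=
  proj1_sig (constructive_indefinite_description _ (quotient_step_exists m)).

(* Stage [n] is a factorization [f = m_n ∘ e_n] through [E_n]; the next stage
   quotients [E_n] by the finitely presentable part of the kernel of [m_n]. *)
Fixpoint stage (n : nat) : {E : O & (hom C P E * hom C E A)%type} :=
  match n with
  | 0 => existT _ P (idm C P, f)
  | S n =>
      let p := quotient_step (snd (projT2 (stage n))) in
      existT _ (projT1 p) (comp C (fst (projT2 p)) (fst (projT2 (stage n))), snd (projT2 p))
  end.

Definition En n : O := projT1 (stage n).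
Definition en n : hom C P (En n) := fst (projT2 (stage n)).
Definition mn n : hom C (En n) A := snd (projT2 (stage n)).
Definition tn n : hom C (En n) (En (S n)) := fst (projT2 (quotient_step (mn n))).

Lemma tn_quotient n : fp_kernel_quotient (mn n) (tn n).
Proof.
  exact (proj1 (proj2_sig (constructive_indefinite_description _ (quotient_step_exists (mn n))))).
Qed.

Lemma mn_tn n : comp C (mn (S n)) (tn n) = mn n.
Proof.
  exact (proj2 (proj2_sig (constructive_indefinite_description _ (quotient_step_exists (mn n))))).
Qed.

Lemma tn_en n : comp C (tn n) (en n) = en (S n).
Proof. reflexivity. Qed.

Lemma mn_en n : comp C (mn n) (en n) = f.
Proof.
  induction n as [|n IH]; [apply comp_idr|].
  now rewrite <- tn_en, comp_assoc, mn_tn.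
Qed.

Lemma en_epi n : epi C (en n).
Proof.
  induction n as [|n IH]; intros Y a b H.
  - now rewrite <- (comp_idr a), <- (comp_idr b).
  - rewrite <- tn_en, !comp_assoc in H. exact (proj2 (proj2 (tn_quotient n)) _ _ _ (IH _ _ _ H)).
Qed.

(* Since every [e_n] is epi, the connecting maps of the chain are determined by
   [T ∘ e_n = e_m]. *)
Lemma chain_map_exists n m : n <= m -> exists T : hom C (En n) (En m), comp C T (en n) = en m.
Proof.
  induction 1 as [|m _ [T HT]]; [exists (idm C _); apply comp_idl|].
  exists (comp C (tn m) T). now rewrite <- comp_assoc, HT.
Qed.

Definition chain_map n m (h : le_hom n m) : hom C (En n) (En m) :=
  proj1_sig (constructive_indefinite_description _ (chain_map_exists (proj2_sig h))).

Lemma chain_map_en n m (h : le_hom n m) : comp C (chain_map h) (en n) = en m.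
Proof.
  exact (proj2_sig (constructive_indefinite_description _ (chain_map_exists (proj2_sig h)))).
Qed.

Lemma chain_map_id n : chain_map (idm OmegaCat n) = idm C (En n).
Proof. apply en_epi. now rewrite chain_map_en, comp_idl. Qed.

Lemma chain_map_comp a b c (g : le_hom b c) (h : le_hom a b) :
  chain_map (comp OmegaCat g h) = comp C (chain_map g) (chain_map h).
Proof. apply en_epi. now rewrite chain_map_en, <- comp_assoc, !chain_map_en. Qed.

Definition Chain : Functor OmegaCat C :=
  @Build_Functor _ _ OmegaCat C En chain_map chain_map_id chain_map_comp.

Lemma mn_chain_map n m (h : le_hom n m) : comp C (mn m) (chain_map h) = mn n.
Proof. apply en_epi. now rewrite <- comp_assoc, chain_map_en, !mn_en. Qed.

Lemma chain_map_succ n (h : le_hom n (S n)) : chain_map h = tn n.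
Proof. apply en_epi. now rewrite chain_map_en. Qed.


Section ChainColimit.
Variables (M : O) (io : forall n, hom C (En n) M) (Hio : is_colimit C Chain io)
  (mM : hom C M A) (HmM : forall n, comp C mM (io n) = mn n).

Lemma io_tn n : comp C (io (S n)) (tn n) = io n.
Proof.
  rewrite <- (chain_map_succ (le_hom_of (Nat.le_succ_diag_r n))). exact (proj1 Hio n (S n) _).
Qed.

Lemma io_en n : comp C (io n) (en n) = io 0.
Proof.
  induction n as [|n IH]; [apply comp_idr|].
  now rewrite <- tn_en, comp_assoc, io_tn.
Qed.

Lemma io0_epi : epi C (io 0).
Proof.
  intros Y a b H. apply (colimit_hom_ext Hio). intro n. apply en_epi.
  rewrite <- !comp_assoc. simpl. now rewrite io_en.
Qed.

Lemma image_mono : mono C mM.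
Proof.
  intros Z x y Hxy. apply (lfp_hom_ext HC). intros Q q HQ.
  destruct (fin_pres_factor_pair OmegaCat_filtered Hio HQ (comp C x q) (comp C y q))
    as [n [a [b [Ha Hb]]]].
  simpl in a, b, Ha, Hb. rewrite Ha, Hb, <- (io_tn n), <- !comp_assoc. f_equal.
  apply (proj1 (tn_quotient n) _ _ _ HQ).
  rewrite <- !HmM, <- !comp_assoc, <- Ha, <- Hb, !comp_assoc. now rewrite Hxy.
Qed.

Lemma image_lift Z (z : hom C M Z) G (g : hom C G Z) (h : hom C P G) :
  mono C g -> comp C g h = comp C z (io 0) ->
  forall n, exists y : hom C (En n) G, comp C y (en n) = h /\ comp C g y = comp C z (io n).
Proof.
  intros Hg Hh. induction n as [|n [y [Hy1 Hy2]]]; [exists h; split; [apply comp_idr|exact Hh]|].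
  destruct (proj1 (proj2 (tn_quotient n)) _ y) as [y' Hy'].
  { intros Q a b HQ Hab. apply Hg. rewrite !comp_assoc, Hy2, <- io_tn, <- !comp_assoc.
    now rewrite (proj1 (tn_quotient n) _ _ _ HQ Hab). }
  exists y'. split.
  - now rewrite <- tn_en, comp_assoc, Hy'.
  - apply (proj2 (proj2 (tn_quotient n))).
    now rewrite <- comp_assoc, Hy', Hy2, <- comp_assoc, io_tn.
Qed.

Lemma image_hom_factor Z (z : hom C M Z) G (g : hom C G Z) (h : hom C P G) :
  mono C g -> comp C g h = comp C z (io 0) -> exists y : hom C M G, comp C g y = z.
Proof.
  intros Hg Hh.
  pose (lift := fun n => constructive_indefinite_description _ (image_lift Hg Hh n)).
  destruct (proj2 Hio G (fun n => proj1_sig (lift n))) as [y [Hy _]].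
  { intros n1 n2 h12. apply en_epi. simpl. rewrite <- comp_assoc, chain_map_en.
    now rewrite (proj1 (proj2_sig (lift n1))), (proj1 (proj2_sig (lift n2))). }
  exists y. apply (colimit_hom_ext Hio). intro n.
  rewrite <- comp_assoc, Hy. exact (proj2 (proj2_sig (lift n))).
Qed.

Lemma image_fin_gen : fin_pres C P -> fin_gen C M.
Proof.
  intros HP SJ J G Z c [HJ HG] Hc. apply set_colimit_intro.
  - intros i j a. apply functional_extensionality. intro z. simpl.
    now rewrite comp_assoc, (proj1 Hc).
  - intro z. simpl in z |- *.
    destruct (fin_pres_factor HJ Hc HP (comp C z (io 0))) as [j [h Hh]].
    destruct (image_hom_factor (lfp_colimit_inj_mono HC HJ HG Hc (j:=j)) (eq_sym Hh)) as [y Hy].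
    now exists j, y.
  - intros i j y y' Hyy. simpl in y, y', Hyy.
    assert (E : comp C (c i) (comp C y (io 0)) = comp C (c j) (comp C y' (io 0)))
      by now rewrite !comp_assoc, Hyy.
    destruct (fin_pres_factor_unique HJ Hc HP E) as [k [a [b Hab]]].
    exists k, a, b. simpl. apply io0_epi. now rewrite <- !comp_assoc.
Qed.

End ChainColimit.

Lemma image_factorization : fin_pres C P ->
  exists M (e : hom C P M) (m : hom C M A), mono C m /\ fin_gen C M /\ f = comp C m e.
Proof.
  intros HP. destruct (proj1 HC _ _ Chain) as [M [io Hio]].
  destruct (proj2 Hio A mn) as [m [Hm _]]; [intros i j h; apply mn_chain_map|].
  exists M, (io 0), m. split; [exact (image_mono Hio Hm)|split; [exact (image_fin_gen Hio HP)|]].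
  exact (eq_sym (Hm 0)).
Qed.

End Image.

Lemma finitary_finitely_bounded OA OB (A : Cat OA) (B : Cat OB) (F : Functor A B) :
  lfp A -> (forall X : OB, fin_gen B X -> fin_pres B X) -> finitary F -> finitely_bounded F.
Proof.
  intros HA Hfg HF X M0 m0 Hm0 HM0.
  destruct (proj2 (proj2 HA) X) as [SJ [J [D [c [HJ [Hfp Hc]]]]]].
  destruct (fin_pres_factor HJ (HF SJ J D X c HJ Hc) (Hfg _ HM0) m0) as [j [h ->]].
  destruct (image_factorization HA (c j) (Hfp j)) as [M [e [m [Hm [HM Hce]]]]].
  exists M, m. split; [exact Hm|split; [exact HM|]].
  exists (comp B (fmap F e) h). simpl. now rewrite Hce, fmap_comp, comp_assoc.
Qed.

Section StrictlyLfp.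
Variables (O : Type) (C : Cat O) (HC : strictly_lfp C).
Variables (SJ : Set) (J : Cat SJ) (D : Functor J C) (X : O) (c : forall j, hom C (fobj D j) X).
Hypotheses (HJ : filtered J) (Hc : is_colimit C D c).

(* The finitary endomorphism fixing the finitely generated image of [c l ∘ w]
   factors through the diagram and thereby carries [c l ∘ w] back into it. *)
Lemma colimit_inj_locally_split K l (w : hom C K (fobj D l)) : fin_pres C K ->
  exists r (b : hom J l r) (phi : hom C X (fobj D r)),
    comp C phi (comp C (c l) w) = comp C (fmap D b) w.
Proof.
  intros HK.
  destruct (image_factorization (proj1 HC) (comp C (c l) w) HK) as [N [e [n [Hn [HN Hne]]]]].
  destruct (proj2 HC X N n Hn HN) as [u [[K2 [v [w2 [HK2 ->]]]] Hun]].
  destruct (fin_pres_factor HJ Hc HK2 w2) as [k [h ->]].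
  assert (E : comp C (c k) (comp C h (comp C v (comp C (c l) w))) = comp C (c l) w)
    by now rewrite Hne, !comp_assoc, Hun.
  destruct (fin_pres_factor_unique HJ Hc HK E) as [r [b [b' Hbb]]].
  exists r, b', (comp C (fmap D b) (comp C h v)). rewrite <- Hbb. now rewrite !comp_assoc.
Qed.

End StrictlyLfp.

Section FinitelyBounded.
Variables (OA OB : Type) (A : Cat OA) (B : Cat OB) (HA : strictly_lfp A) (HB : lfp B)
  (F : Functor A B) (HF : finitely_bounded F).

Lemma bounded_factor_fp Q (HQ : fin_pres B Q) W (g : hom B Q (fobj F W)) :
  exists K (w : hom A K W) (k : hom B Q (fobj F K)), fin_pres A K /\ g = comp B (fmap F w) k.
Proof.
  destruct (image_factorization HB g HQ) as [M0 [e0 [m0 [Hm0 [HM0 ->]]]]].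
  destruct (HF Hm0 HM0) as [M [m [Hm [HM [g0 ->]]]]].
  destruct (proj2 HA W M m Hm HM) as [u [[K [v [w [HK ->]]]] Hum]].
  exists K, w, (comp B (fmap F (comp A v m)) (comp B g0 e0)). split; [exact HK|].
  rewrite comp_assoc, <- fmap_comp, (comp_assoc w v m), Hum. apply eq_sym, comp_assoc.
Qed.

Section FilteredColimit.
Variables (SJ : Set) (J : Cat SJ) (D : Functor J A) (X : OA) (c : forall j, hom A (fobj D j) X).
Hypotheses (HJ : filtered J) (Hc : is_colimit A D c).

Lemma bounded_factor_colimit Q (HQ : fin_pres B Q) (g : hom B Q (fobj F X)) :
  exists j (g' : hom B Q (fobj F (fobj D j))), g = comp B (fmap F (c j)) g'.
Proof.
  destruct (bounded_factor_fp HQ g) as [K [w [k [HK ->]]]].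
  destruct (fin_pres_factor HJ Hc HK w) as [j [h ->]].
  exists j, (comp B (fmap F h) k). now rewrite fmap_comp, comp_assoc.
Qed.

Lemma bounded_factor_colimit_pair Q (HQ : fin_pres B Q) (g1 g2 : hom B Q (fobj F X)) :
  exists j (g1' g2' : hom B Q (fobj F (fobj D j))),
    g1 = comp B (fmap F (c j)) g1' /\ g2 = comp B (fmap F (c j)) g2'.
Proof.
  destruct (bounded_factor_colimit HQ g1) as [j1 [g1' ->]].
  destruct (bounded_factor_colimit HQ g2) as [j2 [g2' ->]].
  destruct (proj1 (proj2 HJ) j1 j2) as [j [a1 [a2 _]]].
  exists j, (comp B (fmap F (fmap D a1)) g1'), (comp B (fmap F (fmap D a2)) g2').
  now rewrite !comp_assoc, <- !fmap_comp, !(proj1 Hc).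
Qed.

End FilteredColimit.

Section Cocone.
Variables (SJ : Set) (J : Cat SJ) (D : Functor J A) (X : OA) (c : forall j, hom A (fobj D j) X).
Hypotheses (HJ : filtered J) (Hc : is_colimit A D c).
Variables (Y : OB) (d : forall j, hom B (fobj F (fobj D j)) Y).
Hypothesis (Hd : is_cocone B (Fcomp F D) d).

Lemma bounded_cocone_fp_eq Q (HQ : fin_pres B Q) l (h1 h2 : hom B Q (fobj F (fobj D l))) :
  comp B (fmap F (c l)) h1 = comp B (fmap F (c l)) h2 -> comp B (d l) h1 = comp B (d l) h2.
Proof.
  intros E.
  destruct (proj2 (proj2 (proj1 HA)) (fobj D l)) as [SK [K [G [p [HK [Hfp Hp]]]]]].
  destruct (bounded_factor_colimit_pair HK Hp HQ h1 h2) as [k [k1 [k2 [-> ->]]]].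
  destruct (colimit_inj_locally_split HA HJ Hc (p k) (Hfp k)) as [r [b [phi Hphi]]].
  assert (Hsplit : comp B (d l) (fmap F (p k))
                   = comp B (comp B (d r) (fmap F phi)) (fmap F (comp A (c l) (p k)))).
  { rewrite <- (Hd b). simpl. rewrite <- !comp_assoc, <- !fmap_comp. now rewrite Hphi. }
  rewrite !comp_assoc, Hsplit, fmap_comp, <- !comp_assoc. now rewrite E.
Qed.

Lemma bounded_cocone_eq Z j j' (g : hom B Z (fobj F (fobj D j))) (g' : hom B Z (fobj F (fobj D j'))) :
  comp B (fmap F (c j)) g = comp B (fmap F (c j')) g' -> comp B (d j) g = comp B (d j') g'.
Proof.
  intros E. apply (lfp_hom_ext HB). intros Q q HQ.
  destruct (proj1 (proj2 HJ) j j') as [l [a [a' _]]].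
  rewrite <- (Hd a), <- (Hd a'). simpl. rewrite <- !comp_assoc.
  apply (bounded_cocone_fp_eq HQ).
  rewrite !comp_assoc, <- !fmap_comp, !(proj1 Hc). exact (f_equal (fun z => comp B z q) E).
Qed.

End Cocone.

Lemma finitely_bounded_finitary : finitary F.
Proof.
  intros SJ J D X c HJ Hc. split.
  - intros i j a. simpl. now rewrite <- fmap_comp, (proj1 Hc).
  - intros Y d Hd.
    destruct (proj2 (proj2 HB) (fobj F X)) as [SK [K [E [p [HK [Hfp Hp]]]]]].
    assert (Hq : forall k, {q : {j : SJ & hom B (fobj E k) (fobj F (fobj D j))} |
                             p k = comp B (fmap F (c (projT1 q))) (projT2 q)}).
    { intro k. apply constructive_indefinite_description.
      destruct (bounded_factor_colimit HJ Hc (Hfp k) (p k)) as [j [g ->]].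
      now exists (existT _ j g). }
    pose (q := fun k => proj1_sig (Hq k)).
    assert (Hpq : forall k, p k = comp B (fmap F (c (projT1 (q k)))) (projT2 (q k)))
      by exact (fun k => proj2_sig (Hq k)).
    destruct (proj2 Hp Y (fun k => comp B (d (projT1 (q k))) (projT2 (q k)))) as [u [Hu _]].
    { intros k k' a. simpl. rewrite <- comp_assoc. apply (bounded_cocone_eq HJ Hc Hd).
      rewrite comp_assoc, <- !Hpq. exact (proj1 Hp k k' a). }
    assert (Hfac : forall j, comp B u (fmap F (c j)) = d j).
    { intro j. apply (lfp_hom_ext HB). intros Q g HQ.
      destruct (fin_pres_factor HK Hp HQ (comp B (fmap F (c j)) g)) as [k [r Hr]].
      rewrite <- comp_assoc, Hr, comp_assoc, Hu, <- comp_assoc.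
      apply (bounded_cocone_eq HJ Hc Hd). rewrite comp_assoc, <- Hpq.
      exact (eq_sym Hr). }
    exists u. split; [exact Hfac|].
    intros u' Hu'. apply (colimit_hom_ext Hp). intro k.
    rewrite Hu, Hpq, comp_assoc. simpl in Hu'. now rewrite Hu'.
Qed.

End FinitelyBounded.

Theorem theoremT (OA OB : Type) (A : Cat OA) (B : Cat OB) :
  strictly_lfp A -> lfp B ->
  (forall X : OB, fin_gen B X <-> fin_pres B X) ->
  forall F : Functor A B, finitary F <-> finitely_bounded F.
Proof.
  intros HA HB Hfg F. split.
  - apply (finitary_finitely_bounded (proj1 HA)). intro X. apply Hfg.
  - apply (finitely_bounded_finitary HA HB).
Qed.
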